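(* Let $u, v, w \in \mathbb{N}^2$ be such that any two of $u, v, w$ are linearly independent. Then the submonoid $\mathbb{N}u+\mathbb{N}v+\mathbb{N}w$ of $\mathbb{N}^2$ generated by $u,v,w$ is isomorphic (as a monoid) to $\Lambda^{p,q,r}$ for some positive integers $p, q, r$.
   Context: $\mathbb{N}=\{0,1,2,\dots\}$. For positive integers $p,q,r$, $\Lambda^{p,q,r}=\langle a,b,c\mid pa+qb=rc\rangle$ is the quotient of the free commutative monoid $\mathbb{N}a\oplus\mathbb{N}b\oplus\mathbb{N}c$ by the congruence generated by $\lambda+pa+qb\sim\lambda+rc$ ($\lambda\in\mathbb{N}a\oplus\mathbb{N}b\oplus\mathbb{N}c$). *)

From mathcomp Require Import all_boot.
Set Implicit Arguments. Unset Strict Implicit. Unset Printing Implicit Defensive.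

Definition N2 := (nat * nat)%type.
Definition N3 := (nat * nat * nat)%type.

Definition add2 (x y : N2) : N2 := (x.1 + y.1, x.2 + y.2).
Definition add3 (x y : N3) : N3 :=
  (x.1.1 + y.1.1, x.1.2 + y.1.2, x.2 + y.2).
Definition smul2 (n : nat) (x : N2) : N2 := (n * x.1, n * x.2).

Definition lin_indep2 (u v : N2) : Prop := u.1 * v.2 <> u.2 * v.1.

Definition in_submonoid3 (u v w : N2) (m : N2) : Prop :=
  exists i j k : nat, m = add2 (add2 (smul2 i u) (smul2 j v)) (smul2 k w).

(* The congruence on N a (+) N b (+) N c = N^3 (a=(1,0,0), b=(0,1,0),
   c=(0,0,1)) generated by  lambda + p a + q b ~ lambda + r c. *)
Inductive lam_cong (p q r : nat) : N3 -> N3 -> Prop :=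
  | lam_gen (l : N3) : lam_cong p q r (add3 l (p, q, 0)) (add3 l (0, 0, r))
  | lam_refl (x : N3) : lam_cong p q r x x
  | lam_sym (x y : N3) : lam_cong p q r x y -> lam_cong p q r y x
  | lam_trans (x y z : N3) :
      lam_cong p q r x y -> lam_cong p q r y z -> lam_cong p q r x z.

(* Lambda^{p,q,r} = N^3 / lam_cong p q r is isomorphic (as a monoid) to the
   submonoid N u + N v + N w of N^2: there is a monoid homomorphism
   f : N^3 -> N^2 which is constant on lam_cong-classes (so descends to
   Lambda^{p,q,r}), whose induced map on classes is injective
   (f x = f y -> x ~ y), and whose image is exactly N u + N v + N w. *)
Definition lambda_iso_submonoid (p q r : nat) (u v w : N2) : Prop :=
  exists f : N3 -> N2,
    [/\ f (0, 0, 0) = (0, 0),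
        (forall x y, f (add3 x y) = add2 (f x) (f y)),
        (forall x y, lam_cong p q r x y -> f x = f y),
        (forall x y, f x = f y -> lam_cong p q r x y)
      & (forall m, in_submonoid3 u v w m <-> exists x, f x = m)].

(* Order the three generators by slope: since they are pairwise independent,
   one of them, say w, lies strictly inside the cone spanned by the other two.
   The cross product (A, B, -C) of the coordinate rows of the matrix [u v w]
   then has A, B, C > 0 and spans the kernel of the map N^3 -> N^2,
   (i, j, k) |-> i u + j v + k w, over Q.  Dividing by g = gcd(A, B, C) gives
   p u + q v = r w with (p, q, r) primitive, and a Bezout identity for
   (p, q, r) shows that every integer kernel vector is a multiple t (p, q, -r).
   Two preimages of the same point therefore differ by a chain of the defining
   relations of Lambda^{p,q,r}, which is thus isomorphic to N u + N v + N w. *)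

From mathcomp Require Import all_boot all_algebra zify ring.
Set Implicit Arguments. Unset Strict Implicit. Unset Printing Implicit Defensive.
Import GRing.Theory.

Definition ccw (a b : N2) : bool := a.2 * b.1 < a.1 * b.2.

Lemma ccw_trans a b c : ccw a b -> ccw b c -> ccw a c.
Proof.
case: a b c => [a1 a2] [b1 b2] [c1 c2]; rewrite /ccw /= => hab hbc.
have := ltn_mul hab hbc.
have -> : a2 * b1 * (b2 * c1) = b1 * b2 * (a2 * c1) by ring.
have -> : a1 * b2 * (b1 * c2) = b1 * b2 * (a1 * c2) by ring.
by rewrite ltn_mul2l => /andP[].
Qed.

Lemma lin_indep2_ccw a b : lin_indep2 a b -> ccw a b \/ ccw b a.
Proof. by case: a b => [a1 a2] [b1 b2]; rewrite /lin_indep2 /ccw /=; lia. Qed.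

Lemma lin_indep2_sym a b : lin_indep2 a b -> lin_indep2 b a.
Proof. by rewrite /lin_indep2; lia. Qed.

Definition comb (u v w : N2) (e : N3) : N2 :=
  add2 (add2 (smul2 e.1.1 u) (smul2 e.1.2 v)) (smul2 e.2 w).

Lemma in_submonoid3E u v w m : in_submonoid3 u v w m <-> exists e, comb u v w e = m.
Proof.
split; first by move=> [i [j [k ->]]]; exists (i, j, k).
by move=> [[[i j] k] <-]; exists i, j, k.
Qed.

Lemma in_submonoid3C12 u v w m : in_submonoid3 u v w m <-> in_submonoid3 v u w m.
Proof.
suff swap x y z : in_submonoid3 x y z m -> in_submonoid3 y x z m by split; apply: swap.
move=> [i [j [k ->]]]; exists j, i, k; rewrite /add2 /smul2 /=; congr (_, _); lia.
Qed.

Lemma in_submonoid3C23 u v w m : in_submonoid3 u v w m <-> in_submonoid3 u w v m.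
Proof.
suff swap x y z : in_submonoid3 x y z m -> in_submonoid3 x z y m by split; apply: swap.
move=> [i [j [k ->]]]; exists i, k, j; rewrite /add2 /smul2 /=; congr (_, _); lia.
Qed.

Definition lambda_presentable (u v w : N2) : Prop :=
  exists p q r : nat, [/\ 0 < p, 0 < q, 0 < r & lambda_iso_submonoid p q r u v w].

Lemma lambda_presentable_eq u v w u' v' w' :
  (forall m, in_submonoid3 u v w m <-> in_submonoid3 u' v' w' m) ->
  lambda_presentable u v w -> lambda_presentable u' v' w'.
Proof.
move=> eqS [p [q [r [p0 q0 r0 [f [f0 fD f_cong cong_f im_f]]]]]].
by exists p, q, r; split=> //; exists f; split=> // m; rewrite -eqS.
Qed.

Lemma lambda_presentableC12 u v w :
  lambda_presentable u v w -> lambda_presentable v u w.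
Proof. by apply: lambda_presentable_eq => m; apply: in_submonoid3C12. Qed.

Lemma lambda_presentableC23 u v w :
  lambda_presentable u v w -> lambda_presentable u w v.
Proof. by apply: lambda_presentable_eq => m; apply: in_submonoid3C23. Qed.

Lemma lam_cong_scaled p q r n l :
  lam_cong p q r (add3 l (n * p, n * q, 0)) (add3 l (0, 0, n * r)).
Proof.
elim: n l => [|n IHn] [[a b] c]; first by rewrite !mul0n; apply: lam_refl.
apply: (@lam_trans _ _ _ _ (add3 (a + n * p, b + n * q, c) (0, 0, r))).
  have -> : add3 (a, b, c) (n.+1 * p, n.+1 * q, 0) = add3 (a + n * p, b + n * q, c) (p, q, 0).
    by rewrite /add3 /=; congr (_, _, _); lia.
  exact: lam_gen.
have -> : add3 (a, b, c) (0, 0, n.+1 * r) = add3 (a, b, c + r) (0, 0, n * r).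
  by rewrite /add3 /=; congr (_, _, _); lia.
have -> : add3 (a + n * p, b + n * q, c) (0, 0, r) = add3 (a, b, c + r) (n * p, n * q, 0).
  by rewrite /add3 /=; congr (_, _, _); lia.
exact: IHn.
Qed.

Definition lam_shift (p q r : nat) (e e' : N3) : Prop :=
  exists l n, e = add3 l (n * p, n * q, 0) /\ e' = add3 l (0, 0, n * r).

Lemma lambda_iso_of_kernel (u v w : N2) p q r :
  add2 (smul2 p u) (smul2 q v) = smul2 r w ->
  (forall e e', comb u v w e = comb u v w e' -> lam_shift p q r e e' \/ lam_shift p q r e' e) ->
  lambda_iso_submonoid p q r u v w.
Proof.
move=> rel kernel; exists (comb u v w); split.
- by rewrite /comb /add2 /smul2 /= !mul0n.
- by move=> [[a b] c] [[a' b'] c']; rewrite /comb /add2 /add3 /smul2 /=; congr (_, _); lia.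
- move=> e e'; elim=> // [[[a b] c]|? ? ? _ -> //].
  by move: rel; rewrite /comb /add2 /add3 /smul2 /= => -[r1 r2]; congr (_, _); lia.
- move=> e e' /kernel[] [l [n [-> ->]]]; first exact: lam_cong_scaled.
  exact/lam_sym/lam_cong_scaled.
- by move=> m; rewrite in_submonoid3E.
Qed.

Section CrossProduct.
Variable R : comRingType.
Local Open Scope ring_scope.

Lemma kernel_parallel_cross (x1 x2 y1 y2 z1 z2 d1 d2 d3 : R) :
  d1 * x1 + d2 * y1 + d3 * z1 = 0 -> d1 * x2 + d2 * y2 + d3 * z2 = 0 ->
  [/\ d1 * (z1 * x2 - x1 * z2) = d2 * (y1 * z2 - z1 * y2),
      d1 * (x1 * y2 - y1 * x2) = d3 * (y1 * z2 - z1 * y2)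
    & d2 * (x1 * y2 - y1 * x2) = d3 * (z1 * x2 - x1 * z2)].
Proof.
move=> e1 e2; split; apply/eqP; rewrite -subr_eq0; apply/eqP.
- transitivity (z1 * (d1 * x2 + d2 * y2 + d3 * z2) - z2 * (d1 * x1 + d2 * y1 + d3 * z1)).
    by ring.
  by rewrite e1 e2; ring.
- transitivity (y2 * (d1 * x1 + d2 * y1 + d3 * z1) - y1 * (d1 * x2 + d2 * y2 + d3 * z2)).
    by ring.
  by rewrite e1 e2; ring.
- transitivity (x1 * (d1 * x2 + d2 * y2 + d3 * z2) - x2 * (d1 * x1 + d2 * y1 + d3 * z1)).
    by ring.
  by rewrite e1 e2; ring.
Qed.

Lemma parallel_bezout (a1 a2 a3 c1 c2 c3 d1 d2 d3 g : R) :
  c1 * a1 + c2 * a2 + c3 * a3 = g ->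
  d1 * a2 = d2 * a1 -> d1 * a3 = d3 * a1 -> d2 * a3 = d3 * a2 ->
  exists t, [/\ g * d1 = t * a1, g * d2 = t * a2 & g * d3 = t * a3].
Proof.
move=> <- h12 h13 h23; exists (c1 * d1 + c2 * d2 + c3 * d3); split.
- transitivity (c1 * a1 * d1 + c2 * (d1 * a2) + c3 * (d1 * a3)); first by ring.
  by rewrite h12 h13; ring.
- transitivity (c1 * (d2 * a1) + c2 * a2 * d2 + c3 * (d2 * a3)); first by ring.
  by rewrite -h12 h23; ring.
- transitivity (c1 * (d3 * a1) + c2 * (d3 * a2) + c3 * a3 * d3); first by ring.
  by rewrite -h13 -h23; ring.
Qed.

End CrossProduct.

Lemma bezoutz3 (a b c : nat) :
  exists c1 c2 c3 : int, (c1 * a%:Z + c2 * b%:Z + c3 * c%:Z = (gcdn (gcdn a b) c)%:Z)%R.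
Proof.
have [u [v eab]] := Bezoutz a b; have [s [t eg]] := Bezoutz (gcdn a b) c.
have eab' : (u * a%:Z + v * b%:Z = (gcdn a b)%:Z)%R := eab.
by exists (s * u)%R, (s * v)%R, t; rewrite -[RHS]eg -eab'; ring.
Qed.

Lemma lam_shift_int (p q r i j k i' j' k' : nat) (t : int) :
  (i%:Z - i'%:Z = t * p%:Z)%R -> (j%:Z - j'%:Z = t * q%:Z)%R -> (k'%:Z - k%:Z = t * r%:Z)%R ->
  lam_shift p q r (i, j, k) (i', j', k') \/ lam_shift p q r (i', j', k') (i, j, k).
Proof.
case: t => n h1 h2 h3; [left; exists (i', j', k), n | right; exists (i, j, k'), n.+1];
  by rewrite /add3 /=; split; congr (_, _, _); lia.
Qed.

Lemma lambda_presentable_between (u v w : N2) :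
  ccw v w -> ccw w u -> lambda_presentable u v w.
Proof.
move=> hvw hwu; have hvu := ccw_trans hvw hwu.
move: hvw hwu hvu; case: u v w => [x1 x2] [y1 y2] [z1 z2]; rewrite /ccw /= => hvw hwu hvu.
pose A := y1 * z2 - y2 * z1; pose B := z1 * x2 - z2 * x1; pose C := y1 * x2 - y2 * x1.
have AZ : (A%:Z = y1%:Z * z2%:Z - z1%:Z * y2%:Z)%R by rewrite /A; lia.
have BZ : (B%:Z = z1%:Z * x2%:Z - x1%:Z * z2%:Z)%R by rewrite /B; lia.
have CZ : (- C%:Z = x1%:Z * y2%:Z - y1%:Z * x2%:Z)%R by rewrite /C; lia.
have rel1 : (A%:Z * x1%:Z + B%:Z * y1%:Z = C%:Z * z1%:Z)%R.
  by rewrite AZ BZ -[Posz C]opprK CZ; ring.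
have rel2 : (A%:Z * x2%:Z + B%:Z * y2%:Z = C%:Z * z2%:Z)%R.
  by rewrite AZ BZ -[Posz C]opprK CZ; ring.
have [c1 [c2 [c3 bez]]] := bezoutz3 A B C.
pose g := gcdn (gcdn A B) C.
have A_gt0 : 0 < A by rewrite /A; lia.
have B_gt0 : 0 < B by rewrite /B; lia.
have C_gt0 : 0 < C by rewrite /C; lia.
have g_gt0 : 0 < g by rewrite !gcdn_gt0 A_gt0.
have g_neq0 : (g%:Z != 0)%R by rewrite eqz_nat -lt0n.
have /dvdnP[p Ap] : g %| A by apply: dvdn_trans (dvdn_gcdl _ _) (dvdn_gcdl _ _).
have /dvdnP[q Bq] : g %| B by apply: dvdn_trans (dvdn_gcdl _ _) (dvdn_gcdr _ _).
have /dvdnP[r Cr] : g %| C by apply: dvdn_gcdr.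
exists p, q, r; split.
- by move: A_gt0; rewrite Ap muln_gt0 => /andP[].
- by move: B_gt0; rewrite Bq muln_gt0 => /andP[].
- by move: C_gt0; rewrite Cr muln_gt0 => /andP[].
apply: lambda_iso_of_kernel.
  rewrite /add2 /smul2 /=; congr (_, _); apply/eqP; rewrite -(eqn_pmul2r g_gt0); apply/eqP; lia.
move=> [[i j] k] [[i' j'] k']; rewrite /comb /add2 /smul2 /= => -[E1 E2].
have [] := @kernel_parallel_cross _ x1%:Z x2%:Z y1%:Z y2%:Z z1%:Z z2%:Z
  (i%:Z - i'%:Z) (j%:Z - j'%:Z) (k%:Z - k'%:Z); [lia | lia |].
rewrite -AZ -BZ -CZ => h12 h13 h23.
have bez' : (c1 * A%:Z + c2 * B%:Z + (- c3) * (- C%:Z) = g%:Z)%R by rewrite mulrNN.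
have [t [t1 t2 t3]] := parallel_bezout bez' h12 h13 h23.
apply: (lam_shift_int (t := t)); apply: (mulfI g_neq0); lia.
Qed.

Theorem proposition3p1 (u v w : N2) :
  lin_indep2 u v -> lin_indep2 u w -> lin_indep2 v w ->
  exists p q r : nat, [/\ 0 < p, 0 < q, 0 < r & lambda_iso_submonoid p q r u v w].
Proof.
move=> huv huw hvw; suff : lambda_presentable u v w by [].
wlog uv : u v huv huw hvw / ccw u v.
  move=> gen; case: (lin_indep2_ccw huv) => [|vu]; first exact: gen.
  by apply/lambda_presentableC12/gen => //; apply: lin_indep2_sym.
case: (lin_indep2_ccw huw) => [uw|wu]; case: (lin_indep2_ccw hvw) => [vw|wv].
- exact/lambda_presentableC23/lambda_presentableC12/lambda_presentable_between.
- exact/lambda_presentableC12/lambda_presentable_between.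
- by have := ccw_trans (ccw_trans wu uv) vw; rewrite /ccw mulnC ltnn.
- exact/lambda_presentableC12/lambda_presentableC23/lambda_presentable_between.
Qed.
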